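(* An own-peak-only rule $\varphi$ on $\mathcal{E}_{\mathcal{SP}}$ is simple if and only if for each economy $(R,\Omega)\in\mathcal{E}_{\mathcal{SP}}$: (i) $\varphi_i(R,\Omega)=p(R_i)$ for every $i\in N^+(R,\Omega)$, and (ii) for every $i\in N^-(R,\Omega)$, $\varphi_i(R,\Omega)$ lies between $\frac{\Omega}{n}$ and $p(R_i)$ (i.e., in the closed interval with these endpoints).
   Context: Let $N=\{1,\dots,n\}$ be a finite set of agents. A preference $R_i$ is a continuous complete preorder on $\mathbb{R}_+\cup\{\infty\}$; its peak $p(R_i)$ is the set of maximal elements. $R_i$ is single-peaked if $p(R_i)$ is a singleton (identified with its element) and for $x,x'\in\mathbb{R}_+$, $x$ is strictly preferred to $x'$ whenever $x'<x\le p(R_i)$ or $p(R_i)\le x<x'$; $\mathcal{SP}$ is the set of these. An economy is $(R,\Omega)$, $R\in\mathcal{SP}^n$, $\Omega>0$; $\mathcal{E}_{\mathcal{SP}}$ is the set of economies; a rule is a map $\varphi:\mathcal{E}_{\mathcal{SP}}\to\mathbb{R}^n_+$ with $\sum_j\varphi_j(R,\Omega)=\Omega$. Own-peak-only: $p(R_i')=p(R_i)$ implies $\varphi_i(R,\Omega)=\varphi_i(R_i',R_{-i},\Omega)$. Let $z(R,\Omega)=\sum_jp(R_j)-\Omega$. Agent $i$ is simple if ($z\ge0$ and $p(R_i)<\Omega/n$) or ($z\le0$ and $p(R_i)>\Omega/n$); $N^+(R,\Omega)$ is the set of simple agents and $N^-(R,\Omega)=N\setminus N^+(R,\Omega)$;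 $E(R,\Omega)=\left|\Omega-\left(\sum_{j\in N^+}p(R_j)+|N^-|\frac{\Omega}{n}\right)\right|$. An own-peak-only rule $\varphi$ is simple if for every economy and $i$: $\varphi_i=p(R_i)$ for $i\in N^+$; $\varphi_i=\frac{\Omega}{n}+\nu_i$ for $i\in N^-$ when $z\ge0$; $\varphi_i=\frac{\Omega}{n}-\nu_i$ for $i\in N^-$ when $z\le0$; where $0\le\nu_i\le|p(R_i)-\frac{\Omega}{n}|$ and $\sum_{j\in N^-}\nu_j=E(R,\Omega)$. *)

From HB Require Import structures.
From mathcomp Require Import all_boot all_order all_algebra.
From mathcomp Require Import all_classical all_reals.
From mathcomp Require Import topology ereal.
Set Implicit Arguments. Unset Strict Implicit. Unset Printing Implicit Defensive.
Import Order.TTheory GRing.Theory Num.Theory.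
Local Open Scope classical_set_scope.
Local Open Scope ring_scope.

Section Defs.
Variable R : realType.

(* The consumption space R_+ \cup {oo}, as a subset of the extended reals. *)
Definition cspace : set (\bar R) := [set x | (0 <= x)%E].

(* A preference is a weak preference relation: pref x y means "x R_i y". *)
Definition pref := \bar R -> \bar R -> Prop.

Definition complete_preorder (P : pref) : Prop :=
  (forall x y, cspace x -> cspace y -> P x y \/ P y x) /\
  (forall x y z, cspace x -> cspace y -> cspace z -> P x y -> P y z -> P x z).

Definition continuous_pref (P : pref) : Prop :=
  forall x, cspace x ->
    closed [set y | cspace y /\ P y x] /\ closed [set y | cspace y /\ P x y].

Definition is_preference (P : pref) : Prop :=
  complete_preorder P /\ continuous_pref P.

Definition strict (P : pref) x y := P x y /\ ~ P y x.

Definition peakset (P : pref) : set (\bar R) :=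
  [set x | cspace x /\ forall y, cspace y -> P x y].

(* the peak, identified with its (unique, for single-peaked preferences) element *)
Definition peak (P : pref) : \bar R := xget 0%E (peakset P).

Definition single_peaked (P : pref) : Prop :=
  is_preference P /\
  (exists p, peakset P = [set p]) /\
  (forall x x' : R, 0 <= x -> 0 <= x' ->
     (((x' < x)%R /\ (x%:E <= peak P)%E) \/ ((peak P <= x%:E)%E /\ (x < x')%R)) ->
     strict P x%:E x'%:E).

Variable n : nat.

Definition profile := 'I_n -> pref.

Definition economy (P : profile) (Om : R) : Prop :=
  (forall i, single_peaked (P i)) /\ 0 < Om.

Definition rule := profile -> R -> 'I_n -> R.

Definition is_rule (phi : rule) : Prop :=
  forall P Om, economy P Om ->
    (forall i, 0 <= phi P Om i) /\ \sum_(j < n) phi P Om j = Om.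

Definition own_peak_only (phi : rule) : Prop :=
  forall P Om i (Q : pref), economy P Om -> single_peaked Q ->
    peak Q = peak (P i) -> phi P Om i = phi (fun j => if j == i then Q else P j) Om i.

Definition zexc (P : profile) (Om : R) : \bar R :=
  ((\sum_(j < n) peak (P j)) - Om%:E)%E.

Definition share (Om : R) : R := Om / n%:R.

Definition simple_agent (P : profile) (Om : R) (i : 'I_n) : Prop :=
  ((0 <= zexc P Om)%E /\ (peak (P i) < (share Om)%:E)%E) \/
  ((zexc P Om <= 0)%E /\ ((share Om)%:E < peak (P i))%E).

Definition Eexc (P : profile) (Om : R) : \bar R :=
  `| Om%:E - ((\sum_(j < n | `[< simple_agent P Om j >]) peak (P j))
              + (#|[pred j : 'I_n | ~~ `[< simple_agent P Om j >]]|%:R * share Om)%:E) |%E.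

Definition simple_rule (phi : rule) : Prop :=
  own_peak_only phi /\
  forall P Om, economy P Om ->
    exists nu : 'I_n -> R,
      (forall i, simple_agent P Om i -> (phi P Om i)%:E = peak (P i)) /\
      (forall i, ~ simple_agent P Om i ->
         ((0 <= zexc P Om)%E -> phi P Om i = share Om + nu i) /\
         ((zexc P Om <= 0)%E -> phi P Om i = share Om - nu i) /\
         0 <= nu i /\ ((nu i)%:E <= `| peak (P i) - (share Om)%:E |)%E) /\
      ((\sum_(j < n | ~~ `[< simple_agent P Om j >]) (nu j)%:E)%E = Eexc P Om).

End Defs.

From HB Require Import structures.
From mathcomp Require Import all_boot all_order all_algebra lra.
From mathcomp Require Import all_classical all_reals.
From mathcomp Require Import topology ereal.
Import Order.TTheory GRing.Theory Num.Theory.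
(* A non-simple agent is one whose peak lies on the side of Omega/n towards which the
   excess demand z pushes, so every phi_i between Omega/n and p_i deviates from
   Omega/n in the direction of sign z.  Taking nu_i := |phi_i - Omega/n| therefore
   realizes phi_i = Omega/n +- nu_i with nu_i <= |p_i - Omega/n|, and since all
   deviations on N^- have one sign, feasibility sum_j phi_j = Omega turns
   sum_{N^-} nu_j into |Omega - (sum_{N^+} p_j + |N^-| Omega/n)| = E.  Conversely
   phi_i = Omega/n +- nu_i with 0 <= nu_i <= |p_i - Omega/n| lies between Omega/n
   and p_i. *)

Set Implicit Arguments. Unset Strict Implicit. Unset Printing Implicit Defensive.
Local Open Scope ring_scope.

Lemma norm_sumr_same_sign (R : realDomainType) (I : finType) (A : pred I) (F : I -> R) :
  (forall i, A i -> 0 <= F i) \/ (forall i, A i -> F i <= 0) ->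
  `|\sum_(i | A i) F i| = \sum_(i | A i) `|F i|.
Proof.
case=> sgnF.
- by rewrite ger0_norm ?sumr_ge0 //; apply: eq_bigr => i /sgnF/ger0_norm.
- by rewrite ler0_norm ?sumr_le0 // -sumrN; apply: eq_bigr => i /sgnF/ler0_norm.
Qed.

Section Between.
Variable R : realDomainType.
Local Open Scope ereal_scope.

Definition betweenE (a b x : \bar R) : Prop := (a <= x /\ x <= b) \/ (b <= x /\ x <= a).

Variables (s x : R) (p : \bar R).

Lemma betweenE_norm_le : betweenE s%:E p x%:E -> `|x - s|%:E <= `|p - s%:E|.
Proof.
case: p => [r | | ] //=; rewrite ?leey // /betweenE !lee_fin.
by case=> -[? ?]; [rewrite !ger0_norm | rewrite !ler0_norm]; lra.
Qed.

Lemma betweenE_ge : s%:E <= p -> betweenE s%:E p x%:E -> (s <= x)%R.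
Proof.
case: p => [r | | ] //=; rewrite /betweenE ?lee_fin ?leye_eq.
- by move=> ? [[] | []]; lra.
- by move=> _ [[] | []].
Qed.

Lemma betweenE_le : p <= s%:E -> betweenE s%:E p x%:E -> (x <= s)%R.
Proof.
case: p => [r | | ] //=; rewrite /betweenE ?lee_fin ?leeNy_eq.
- by move=> ? [[] | []]; lra.
- by move=> _ [[] | []].
Qed.

Lemma betweenE_addr (nu : R) : s%:E <= p -> (0 <= nu)%R -> nu%:E <= `|p - s%:E| ->
  betweenE s%:E p (s + nu)%:E.
Proof.
case: p => [r | | ] //= sp nu_ge0 nu_le; left; rewrite ?leey !lee_fin.
- rewrite lee_fin in sp; move: nu_le; rewrite ger0_norm ?subr_ge0 // lee_fin; lra.
- by split=> //; lra.
Qed.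

Lemma betweenE_subr (nu : R) : p <= s%:E -> (0 <= nu)%R -> nu%:E <= `|p - s%:E| ->
  betweenE s%:E p (s - nu)%:E.
Proof.
case: p => [r | | ] //= sp nu_ge0 nu_le; right; rewrite ?leNye !lee_fin.
- rewrite lee_fin in sp; move: nu_le; rewrite ler0_norm ?subr_le0 // lee_fin; lra.
- by split=> //; lra.
Qed.

End Between.

Section Economy.
Variables (R : realType) (n : nat) (P : profile R n) (Om : R).
Local Notation s := (share n Om).
Local Notation simple := (simple_agent P Om).

Lemma nonsimple_share_le_peak i :
  ~ simple i -> (0 <= zexc P Om)%E -> (s%:E <= peak (P i))%E.
Proof. by move=> nsi z_ge0; rewrite leNgt; apply/negP => lt; apply: nsi; left. Qed.

Lemma nonsimple_peak_le_share i :
  ~ simple i -> (zexc P Om <= 0)%E -> (peak (P i) <= s%:E)%E.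
Proof. by move=> nsi z_le0; rewrite leNgt; apply/negP => lt; apply: nsi; right. Qed.

Lemma Eexc_allocation (x : 'I_n -> R) :
  \sum_j x j = Om -> (forall i, simple i -> (x i)%:E = peak (P i)) ->
  Eexc P Om = `|\sum_(j | ~~ `[< simple j >]) (x j - s)|%:E.
Proof.
move=> sum_x x_simple; rewrite /Eexc.
have -> : (\sum_(j | `[< simple j >]) peak (P j) =
           (\sum_(j | `[< simple j >]) x j)%:E)%E.
  by rewrite -sumEFin; apply: eq_bigr => j /asboolP/x_simple.
have -> : #|[pred j | ~~ `[< simple j >]]|%:R * s = \sum_(j | ~~ `[< simple j >]) s.
  by rewrite sumr_const mulr_natl.
rewrite -EFinD /= sumrB -[in X in X - _]sum_x (bigID (fun j => `[< simple j >])) /=.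
by rewrite opprD addrACA subrr add0r.
Qed.

Definition simple_allocation (x : 'I_n -> R) : Prop :=
  exists nu : 'I_n -> R,
    (forall i, simple i -> (x i)%:E = peak (P i)) /\
    (forall i, ~ simple i ->
       ((0 <= zexc P Om)%E -> x i = s + nu i) /\
       ((zexc P Om <= 0)%E -> x i = s - nu i) /\
       0 <= nu i /\ ((nu i)%:E <= `| peak (P i) - s%:E |)%E) /\
    ((\sum_(j < n | ~~ `[< simple j >]) (nu j)%:E)%E = Eexc P Om).

Definition bounded_allocation (x : 'I_n -> R) : Prop :=
  (forall i, simple i -> (x i)%:E = peak (P i)) /\
  (forall i, ~ simple i -> betweenE s%:E (peak (P i)) (x i)%:E).

Lemma simple_allocation_bounded x : simple_allocation x -> bounded_allocation x.
Proof.
case=> nu [x_simple [x_nonsimple _]]; split=> // i nsi.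
have [x_add [x_sub [nu_ge0 nu_le]]] := x_nonsimple i nsi.
have [z_ge0 | /ltW z_le0] := leP 0%E (zexc P Om).
- by rewrite (x_add z_ge0); apply: betweenE_addr => //; apply: nonsimple_share_le_peak.
- by rewrite (x_sub z_le0); apply: betweenE_subr => //; apply: nonsimple_peak_le_share.
Qed.

Lemma bounded_allocation_simple x :
  \sum_j x j = Om -> bounded_allocation x -> simple_allocation x.
Proof.
move=> sum_x [x_simple x_between].
have x_ge_s i : ~ simple i -> (0 <= zexc P Om)%E -> s <= x i.
  by move=> nsi z_ge0; apply: betweenE_ge (x_between i nsi); apply: nonsimple_share_le_peak.
have x_le_s i : ~ simple i -> (zexc P Om <= 0)%E -> x i <= s.
  by move=> nsi z_le0; apply: betweenE_le (x_between i nsi); apply: nonsimple_peak_le_share.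
exists (fun i => `|x i - s|); split=> //; split.
- move=> i nsi; split; [|split].
  + by move=> /(x_ge_s i nsi) s_le; rewrite ger0_norm ?subr_ge0 // addrC subrK.
  + by move=> /(x_le_s i nsi) le_s; rewrite ler0_norm ?subr_le0 // opprK addrC subrK.
  + by split; [exact: normr_ge0 | exact: betweenE_norm_le (x_between i nsi)].
- rewrite (Eexc_allocation sum_x x_simple) sumEFin norm_sumr_same_sign //.
  have [z_ge0 | z_lt0] := leP 0%E (zexc P Om); [left | right] => i /asboolP nsi.
  + by rewrite subr_ge0 x_ge_s.
  + by rewrite subr_le0 x_le_s // ltW.
Qed.

End Economy.

Theorem lemma1 (R : realType) (n : nat) (phi : rule R n) :
  is_rule phi -> own_peak_only phi ->
  (simple_rule phi <->
   (forall (P : profile R n) (Om : R), economy P Om ->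
      (forall i, simple_agent P Om i -> (phi P Om i)%:E = peak (P i)) /\
      (forall i, ~ simple_agent P Om i ->
         (((share n Om)%:E <= (phi P Om i)%:E)%E /\ ((phi P Om i)%:E <= peak (P i))%E) \/
         ((peak (P i) <= (phi P Om i)%:E)%E /\ ((phi P Om i)%:E <= (share n Om)%:E)%E)))).
Proof.
move=> phi_rule phi_opo; split=> [[_ phi_simple] P Om econ | phi_bounded].
  exact/simple_allocation_bounded/phi_simple.
split=> // P Om econ; apply: bounded_allocation_simple.
- exact: (phi_rule P Om econ).2.
- exact: phi_bounded.
Qed.
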